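(* For $n \ge 2$, if $n \pmod 6 \in \{2,4\}$, then the path $P_n$ is $\gamma_{\rm tg}$-critical.
   Context: Total domination game: Dominator and Staller alternately choose vertices, each chosen vertex must be adjacent to some vertex not yet totally dominated; the game ends when no legal move exists; Dominator minimizes, Staller maximizes the number of moves; $\gamma_{\rm tg}(G)$ is the number of moves in the Dominator-start game under optimal play. $G|v$ is $G$ with $v$ declared already totally dominated, with $\gamma_{\rm tg}(G|v)$ defined analogously. $G$ is $\gamma_{\rm tg}$-critical if $\gamma_{\rm tg}(G|v)<\gamma_{\rm tg}(G)$ for all vertices $v$. *)

From mathcomp Require Import all_boot.
Set Implicit Arguments. Unset Strict Implicit. Unset Printing Implicit Defensive.

Section TotalDominationGame.
Variables (T : finType) (adj : rel T).

Definition nbhd (v : T) : {set T} := [set u | adj v u].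

(* S is the set of vertices already totally dominated.  A vertex v is a
   legal move iff it is adjacent to some vertex not yet totally dominated. *)
Definition legal (S : {set T}) (v : T) : bool := [exists u, adj v u && (u \notin S)].

Definition seq_min (s : seq nat) : nat :=
  if s is x :: xs then foldr minn x xs else 0.
Definition seq_max (s : seq nat) : nat := foldr maxn 0 s.

(* Number of remaining moves under optimal play; dom_turn = Dominator to
   move.  Each move strictly enlarges S, so fuel #|T|.+1 is sufficient. *)
Fixpoint game_value (fuel : nat) (dom_turn : bool) (S : {set T}) : nat :=
  match fuel with
  | 0 => 0
  | f.+1 =>
    let moves := [seq v <- enum T | legal S v] in
    if moves is [::] then 0 else
    let vals := [seq (game_value f (~~ dom_turn) (S :|: nbhd v)).+1 | v <- moves] in
    if dom_turn then seq_min vals else seq_max vals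
  end.

Definition gamma_tg : nat := game_value #|T|.+1 true set0.

(* gamma_tg(G|v): v declared already totally dominated. *)
Definition gamma_tg_pre (v : T) : nat := game_value #|T|.+1 true [set v].

Definition gamma_tg_critical : Prop := forall v : T, gamma_tg_pre v < gamma_tg.

End TotalDominationGame.

Definition path_adj (n : nat) : rel 'I_n :=
  fun i j => (i.+1 == j :> nat) || (j.+1 == i :> nat).
Arguments path_adj n i j : clear implicits.

From mathcomp Require Import all_boot zify.
Set Implicit Arguments. Unset Strict Implicit. Unset Printing Implicit Defensive.

(* On P_n a vertex dominates only its two neighbours, so the vertices split by
   parity into two independent chains.  Concatenated into one row of cells
   with a permanent blank between them, the game becomes: a move erases two
   adjacent cells and is legal iff one of them is still occupied.  This
   erasing game has an explicit value: if the maximal occupied runs have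
   lengths k_i, B = sum_i floor((2 k_i + 1) / 3) and C is the number of
   k_i = 2 mod 3, then it lasts B + floor(C / 2) moves when Dominator starts
   and B + ceil(C / 2) when Staller starts.  Indeed no move beats these
   values in the minimax recursion, and erasing at the end of a run (of
   length 2 mod 3 if there is one) attains them.  For n = 2m the initial row
   consists of two runs of length m; declaring a vertex dominated splits one
   of them into two runs of total length m - 1, which lowers the value
   exactly when m is not divisible by 3. *)

Lemma seq_max_bigmax (s : seq nat) : seq_max s = \max_(x <- s) x.
Proof. by elim: s => [|x s IH]; rewrite ?big_nil ?big_cons //= IH. Qed.

Lemma seq_max_eq (s : seq nat) a :
  {in s, forall x, x <= a} -> a \in s -> seq_max s = a.
Proof.
move=> ub a_s; apply/eqP; rewrite seq_max_bigmax eqn_leq leq_bigmax_seq // andbT.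
by apply/bigmax_leqP_seq => x /ub.
Qed.

Lemma foldr_minn_mem x (s : seq nat) : foldr minn x s \in x :: s.
Proof.
elim: s => [|y s IH] /=; rewrite ?mem_head //.
case: leqP => _; first by rewrite !inE eqxx orbT.
by move: IH; rewrite !inE => /orP[] ->; rewrite ?orbT.
Qed.

Lemma foldr_minn_le x (s : seq nat) y : y \in x :: s -> foldr minn x s <= y.
Proof.
elim: s => [|z s IH] /=; first by rewrite inE => /eqP ->.
by rewrite !inE geq_min => /or3P[h|/eqP ->|h]; rewrite ?leqnn ?orbT // IH ?inE ?h ?orbT.
Qed.

Lemma seq_min_eq (s : seq nat) a :
  {in s, forall x, a <= x} -> a \in s -> seq_min s = a.
Proof.
case: s => [//|x s] lb a_s /=; apply/eqP.
by rewrite eqn_leq foldr_minn_le // lb // foldr_minn_mem.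
Qed.

Section GameValueCharacterisation.
Variables (T : finType) (adj : rel T) (W : bool -> {set T} -> nat).
Local Notation play S v := (S :|: nbhd adj v).

Hypothesis W_over : forall S, (forall v, ~~ legal adj S v) -> forall dom, W dom S = 0.
Hypothesis W_bounds : forall S v, legal adj S v ->
  W true S <= (W false (play S v)).+1 /\ (W true (play S v)).+1 <= W false S.
Hypothesis W_opt : forall dom S v, legal adj S v ->
  exists2 w, legal adj S w & W dom S = (W (~~ dom) (play S w)).+1.

Lemma legal_card_undominated S v :
  legal adj S v -> #|~: play S v| < #|~: S|.
Proof.
case/existsP=> u /andP[uv uS]; apply/proper_card/properP; split.
  by rewrite setCS subsetUl.
by exists u; rewrite !inE ?uS ?uv ?orbT.
Qed.

Lemma game_value_eq f dom S : #|~: S| <= f -> game_value adj f dom S = W dom S.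
Proof.
elim: f dom S => [|f IH] dom S le_S_f.
  by rewrite W_over // => v; apply: contraT => /negPn /legal_card_undominated; lia.
rewrite /=; set moves := filter _ _.
have movesE v : (v \in moves) = legal adj S v by rewrite mem_filter mem_enum andbT.
case moves_nil: moves => [|w ws].
  by rewrite W_over // => v; rewrite -movesE moves_nil.
rewrite -moves_nil.
have valsE : [seq (game_value adj f (~~ dom) (play S v)).+1 | v <- moves] =
             [seq (W (~~ dom) (play S v)).+1 | v <- moves].
  apply/eq_in_map => v; rewrite movesE => /legal_card_undominated lt_vS.
  by rewrite IH //; lia.
have [v v_legal W_v] : exists2 v, legal adj S v & W dom S = (W (~~ dom) (play S v)).+1.
  by apply: (W_opt dom (v := w)); rewrite -movesE moves_nil mem_head.
have W_vals : W dom S \in [seq (W (~~ dom) (play S v)).+1 | v <- moves].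
  by apply/mapP; exists v; rewrite ?movesE.
rewrite valsE {valsE}; case: dom W_v W_vals => /= W_v W_vals.
- by apply: seq_min_eq => // x /mapP[u]; rewrite movesE => /W_bounds[? _] ->.
- by apply: seq_max_eq => // x /mapP[u]; rewrite movesE => /W_bounds[_ ?] ->.
Qed.

Lemma gamma_tg_eq : gamma_tg adj = W true set0.
Proof. by apply: game_value_eq; apply: leq_trans (max_card _) _. Qed.

Lemma gamma_tg_pre_eq v : gamma_tg_pre adj v = W true [set v].
Proof. by apply: game_value_eq; apply: leq_trans (max_card _) _. Qed.

End GameValueCharacterisation.

(* [true_runs k L] lists the lengths of the maximal blocks of [true] in
   [nseq k true ++ L], including the empty blocks between adjacent [false]s. *)
Fixpoint true_runs (k : nat) (L : seq bool) : seq nat :=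
  match L with
  | [::] => [:: k]
  | true :: L' => true_runs k.+1 L'
  | false :: L' => k :: true_runs 0 L'
  end.

Definition sum_runs (g : nat -> nat) (L : seq bool) : nat :=
  sumn (map g (true_runs 0 L)).

Lemma true_runs_cat_false k X Y :
  true_runs k (X ++ false :: Y) = true_runs k X ++ true_runs 0 Y.
Proof. by elim: X k => [|[] X IH] k //=; rewrite IH. Qed.

Lemma true_runs_nseq_cat k t Y : true_runs k (nseq t true ++ Y) = true_runs (k + t) Y.
Proof. by elim: t k => [|t IH] k /=; rewrite ?addn0 // IH addnS. Qed.

Lemma true_runs_nseq k t : true_runs k (nseq t true) = [:: k + t].
Proof. by rewrite -[nseq t true]cats0 true_runs_nseq_cat. Qed.

Lemma sum_runs_nseq_cat g t Y :
  sum_runs g (nseq t true ++ Y) = sumn (map g (true_runs t Y)).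
Proof. by rewrite /sum_runs true_runs_nseq_cat. Qed.

Section SumRuns.
Variable g : nat -> nat.
Hypothesis g0 : g 0 = 0.

Lemma sum_runs_nil : sum_runs g [::] = 0.
Proof. by rewrite /sum_runs /= g0. Qed.

Lemma sum_runs_cat_false X Y :
  sum_runs g (X ++ false :: Y) = sum_runs g X + sum_runs g Y.
Proof. by rewrite /sum_runs true_runs_cat_false map_cat sumn_cat. Qed.

Lemma sum_runs_false Y : sum_runs g (false :: Y) = sum_runs g Y.
Proof. by rewrite -[false :: Y]cat0s sum_runs_cat_false sum_runs_nil. Qed.

Lemma sum_runs_nseq_false j Y : sum_runs g (nseq j false ++ Y) = sum_runs g Y.
Proof. by elim: j => //= j IH; rewrite sum_runs_false. Qed.

Lemma sum_runs_nseq t : sum_runs g (nseq t true) = g t.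
Proof. by rewrite /sum_runs true_runs_nseq /= addn0. Qed.

Lemma sum_runs_catl X Y :
  last false X = false -> sum_runs g (X ++ Y) = sum_runs g X + sum_runs g Y.
Proof.
case/lastP: X => [|X b]; first by rewrite sum_runs_nil.
rewrite last_rcons => ->.
by rewrite cat_rcons sum_runs_cat_false -cats1 sum_runs_cat_false sum_runs_nil addn0.
Qed.

Lemma sum_runs_catr X Y :
  head false Y = false -> sum_runs g (X ++ Y) = sum_runs g X + sum_runs g Y.
Proof.
case: Y => [|b Y] /= hY; first by rewrite cats0 sum_runs_nil addn0.
by rewrite hY sum_runs_cat_false sum_runs_false.
Qed.

Lemma sum_runs_block X B Y : last false X = false -> head false Y = false ->
  sum_runs g (X ++ B ++ Y) = sum_runs g X + sum_runs g B + sum_runs g Y.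
Proof. by move=> hX hY; rewrite sum_runs_catl // sum_runs_catr // addnA. Qed.

Lemma sum_runs_run X k Y : last false X = false -> head false Y = false ->
  sum_runs g (X ++ nseq k true ++ Y) = sum_runs g X + g k + sum_runs g Y.
Proof. by move=> hX hY; rewrite sum_runs_block // sum_runs_nseq. Qed.

Lemma sum_runs_no_true (L : seq bool) : true \notin L -> sum_runs g L = 0.
Proof.
elim: L => [|[] L IH]; rewrite ?sum_runs_nil // inE /= => /IH.
by rewrite sum_runs_false.
Qed.

End SumRuns.

Lemma split_trailing_trues X :
  exists X0 t, X = X0 ++ nseq t true /\ last false X0 = false.
Proof.
elim/last_ind: X => [|X [] [X0 [t [-> hX0]]]]; first by exists [::], 0.
  by exists X0, t.+1; rewrite -cats1 -catA -addn1 nseqD.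
by exists (rcons (X0 ++ nseq t true) false), 0; rewrite cats0 last_rcons.
Qed.

Lemma split_leading_trues Y :
  exists h Y0, Y = nseq h true ++ Y0 /\ head false Y0 = false.
Proof.
elim: Y => [|[] Y [h [Y0 [-> hY0]]]]; first by exists 0, [::].
  by exists h.+1, Y0.
by exists 0, (false :: nseq h true ++ Y0).
Qed.

Lemma true_runs_has (P : pred nat) k L : has P (true_runs k L) ->
  exists X t Y, [/\ P t, nseq k true ++ L = X ++ nseq t true ++ Y,
                    last false X = false & head false Y = false].
Proof.
elim: L k => [|[] L IH] k /=.
- by rewrite orbF => Pk; exists [::], k, [::]; rewrite cats0.
- case/IH=> X [t [Y [Pt E hX hY]]]; exists X, t, Y; split => //.
  by rewrite -E -addn1 nseqD -catA.
- case/orP=> [Pk | /IH[X [t [Y [Pt E hX hY]]]]]; first by exists [::], k, (false :: L).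
  exists (nseq k true ++ false :: X), t, Y; split => //; last by rewrite last_cat.
  by rewrite -catA /= -E.
Qed.

Lemma has_true_runs_pos k (L : seq bool) :
  (true \in L) || (0 < k) -> has (leq 1) (true_runs k L).
Proof.
elim: L k => [|[] L IH] k /=; rewrite ?inE ?orbF //=.
  by move=> _; apply: IH; rewrite orbT.
by case/orP=> [L1 | ->] //; rewrite IH ?L1 ?orbT.
Qed.

Lemma has_sumn_pos (g : nat -> nat) s : 0 < sumn (map g s) -> has (fun k => 0 < g k) s.
Proof. by elim: s => //= x s IH; case: (posnP (g x)) => [->|] //=. Qed.

Lemma nth_nseq_cat_false a Y i : nth false (nseq a true ++ false :: Y) i =
  if i < a then true else if i == a then false else nth false Y (i - a.+1).
Proof.
rewrite nth_cat size_nseq nth_nseq; case: ltngtP => // [lt_ai | ->]; last by rewrite subnn.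
by rewrite -[i - a]prednK ?subn_gt0 // subnS.
Qed.

Fixpoint clear2 (p : nat) (L : seq bool) : seq bool :=
  match L with
  | [::] => [::]
  | b :: L' => if p is p'.+1 then b :: clear2 p' L'
               else false :: (if L' is _ :: L'' then false :: L'' else [::])
  end.

Lemma clear2_cat X x Y : clear2 (size X) (X ++ x :: Y) =
  X ++ false :: (if Y is _ :: Y0 then false :: Y0 else [::]).
Proof. by elim: X => //= b X ->. Qed.

Lemma size_clear2 p L : size (clear2 p L) = size L.
Proof. by elim: L p => [|b L IH] [|p] //=; [case: L {IH} | rewrite IH]. Qed.

Lemma nth_clear2 p L i :
  nth false (clear2 p L) i = [&& nth false L i, i != p & i != p.+1].
Proof.
elim: L p i => [|b L IH] [|p] [|i] //=; rewrite ?andbF ?andbT ?IH //.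
by case: L {IH} => [|c L]; case: i => [|i] //=; rewrite ?andbF ?andbT.
Qed.

Definition run_value (k : nat) : nat := (2 * k + 1) %/ 3.

(* 1 if k = 2 mod 3, and 0 otherwise. *)
Definition mod3_two (k : nat) : nat := k.+1 %/ 3 - k %/ 3.

Definition clear_value (dom : bool) (L : seq bool) : nat :=
  sum_runs run_value L + (sum_runs mod3_two L + ~~ dom) %/ 2.

Lemma sum_runs_clear2 X x Z : x || head false Z ->
  exists (R : (nat -> nat) -> nat) t h (x' y : bool), x' || y /\
  forall g, g 0 = 0 ->
    sum_runs g (X ++ x :: Z) = R g + sumn (map g (true_runs t [:: x', y & nseq h true])) /\
    sum_runs g (clear2 (size X) (X ++ x :: Z)) = R g + g t + g h.
Proof.
rewrite clear2_cat; have [X0 [t [-> hX0]]] := split_trailing_trues X.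
case: Z => [|y Y] /= x_or_y.
  exists (sum_runs ^~ X0), t, 0, true, false; split => // g g0.
  rewrite orbF in x_or_y; rewrite x_or_y -!catA !(sum_runs_catl g0 _ hX0).
  by rewrite !sum_runs_nseq_cat /= g0 !addn0.
have [h [Y0 [-> hY0]]] := split_leading_trues Y.
exists (fun g => sum_runs g X0 + sum_runs g Y0), t, h, x, y; split=> [//|g g0].
rewrite -!catA -!cat_cons !catA -!(catA X0) !(sum_runs_block g0 _ hX0 hY0) !sum_runs_nseq_cat.
split; first by rewrite addnAC.
by rewrite /= true_runs_nseq /= g0 !add0n; lia.
Qed.

Lemma clear_value_move_bounds L p : p < size L -> nth false L p || nth false L p.+1 ->
  clear_value true L <= (clear_value false (clear2 p L)).+1 /\
  (clear_value true (clear2 p L)).+1 <= clear_value false L.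
Proof.
move=> lt_pL move_p.
have LE : L = take p L ++ nth false L p :: drop p.+1 L by rewrite -drop_nth ?cat_take_drop.
have size_take_p : size (take p L) = p by rewrite size_take lt_pL.
have /(sum_runs_clear2 (take p L)) : nth false L p || head false (drop p.+1 L).
  by rewrite -nth0 nth_drop addn0.
rewrite -LE size_take_p => -[R [t [h [x [y [x_or_y sumE]]]]]].
rewrite /clear_value; have [-> ->] := sumE run_value erefl.
have [-> ->] := sumE mod3_two erefl.
by case: x y x_or_y {sumE} => [] [] //= _; rewrite true_runs_nseq /= /run_value /mod3_two; lia.
Qed.

Lemma exists_target_run (L : seq bool) : true \in L -> exists X k Y,
  [/\ L = X ++ nseq k true ++ Y, last false X = false, head false Y = false,
      0 < k & sum_runs mod3_two L = 0 \/ k %% 3 = 2].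
Proof.
move=> L_true; case: (posnP (sum_runs mod3_two L)) => [C0 | /has_sumn_pos].
  have := @has_true_runs_pos 0 L; rewrite L_true => /(_ isT)/true_runs_has.
  by case=> X [k [Y [k_pos /= E hX hY]]]; exists X, k, Y; split; try left.
case/true_runs_has=> X [k [Y [crit /= E hX hY]]]; exists X, k, Y.
by split=> //; move: crit; rewrite /mod3_two; lia.
Qed.

Lemma clear2_run_end X k Y j : head false Y = false -> 0 < j <= 2 -> j <= k ->
  clear2 (size X + (k - j)) (X ++ nseq k true ++ Y) =
  X ++ nseq (k - j) true ++ nseq j false ++ Y.
Proof.
move=> hY j_range le_jk.
have -> : X ++ nseq k true ++ Y = (X ++ nseq (k - j) true) ++ true :: nseq j.-1 true ++ Y.
  by rewrite -catA -{1}(subnK le_jk) nseqD -catA; case: j j_range {le_jk}.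
have -> : size X + (k - j) = size (X ++ nseq (k - j) true) by rewrite size_cat size_nseq.
rewrite clear2_cat -catA.
by congr (_ ++ _); case: j j_range {le_jk} => [|[|[|]]] //= _; case: Y hY => [|[] Y].
Qed.

Lemma sum_runs_cleared g X t j Y : g 0 = 0 -> last false X = false -> 0 < j ->
  sum_runs g (X ++ nseq t true ++ nseq j false ++ Y) = sum_runs g X + g t + sum_runs g Y.
Proof.
move=> g0 hX; case: j => // j _.
rewrite sum_runs_catl //= sum_runs_cat_false // sum_runs_nseq //.
by rewrite sum_runs_nseq_false // addnA.
Qed.

(* Play at the end of a run of length 2 mod 3 if there is one, and of any
   nonempty run otherwise: Staller clears one of its cells, Dominator two. *)
Lemma clear_value_optimal dom (L : seq bool) : true \in L -> exists p,
  [/\ p < size L, nth false L p & clear_value dom L = (clear_value (~~ dom) (clear2 p L)).+1].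
Proof.
case/exists_target_run=> X [k [Y [-> hX hY k_pos crit]]].
move jE : (if dom then minn k 2 else 1) => j.
have [j_range le_jk] : 0 < j <= 2 /\ j <= k by move: jE; case: dom; lia.
exists (size X + (k - j)); split.
- by rewrite !size_cat size_nseq; lia.
- have lt_kj_k : k - j < k by lia.
  by rewrite nth_cat ltnNge leq_addr /= addKn nth_cat size_nseq lt_kj_k nth_nseq lt_kj_k.
- rewrite clear2_run_end // /clear_value !sum_runs_cleared //; try lia.
  move: crit jE; rewrite !sum_runs_run // /run_value /mod3_two.
  by case: dom; lia.
Qed.

Section PathCells.
Variable m : nat.
Hypothesis m_pos : 0 < m.
Local Notation n := m.*2.
Local Notation adj := (path_adj n).

(* Cell m is a permanent separator; even vertices u occupy cells 0, ..., m - 1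
   from left to right, odd ones cells 2m, ..., m + 1 from right to left, so
   that N(v) is the content of cells [move_cell v] and [(move_cell v).+1]. *)
Definition target_cell (u : 'I_n) : nat := if odd u then n - u./2 else u./2.
Definition move_cell (v : 'I_n) : nat := if odd v then v./2 else n - v./2.

Lemma path_adj_cells (u v : 'I_n) :
  adj v u = (target_cell u == move_cell v) || (target_cell u == (move_cell v).+1).
Proof.
rewrite /path_adj /target_cell /move_cell.
have := ltn_ord u; have := ltn_ord v; move: (nat_of_ord u) (nat_of_ord v) => a b.
by case: (odd a) / idP; case: (odd b) / idP; lia.
Qed.

Lemma target_cell_le u : target_cell u <= n.
Proof. by rewrite /target_cell; have := ltn_ord u; case: (odd u) / idP; lia. Qed.

Lemma target_cell_neq u : target_cell u != m.
Proof. by rewrite /target_cell; have := ltn_ord u; case: (odd u) / idP; lia. Qed.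

Lemma move_cell_le v : move_cell v <= n.
Proof. by rewrite /move_cell; have := ltn_ord v; case: (odd v) / idP; lia. Qed.

Lemma target_cell_inj : injective target_cell.
Proof.
move=> u w; rewrite /target_cell => E; apply: val_inj => /=; move: E.
have := ltn_ord u; have := ltn_ord w.
by case: (odd u) / idP; case: (odd w) / idP; lia.
Qed.

Lemma target_cell_onto i : i <= n -> i != m -> exists u, target_cell u = i.
Proof.
move=> le_in ne_im; case: (ltnP i m) => lt_im.
  have lt_un : i.*2 < n by lia.
  by exists (Ordinal lt_un); rewrite /target_cell /=; case: ifP; lia.
have lt_un : (n - i).*2.+1 < n by lia.
by exists (Ordinal lt_un); rewrite /target_cell /=; case: ifP; lia.
Qed.

Lemma move_cell_onto i : i <= n -> i != m -> exists v, move_cell v = i.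
Proof.
move=> le_in ne_im; case: (ltnP i m) => lt_im.
  have lt_vn : i.*2.+1 < n by lia.
  by exists (Ordinal lt_vn); rewrite /move_cell /=; case: ifP; lia.
have lt_vn : (n - i).*2 < n by lia.
by exists (Ordinal lt_vn); rewrite /move_cell /=; case: ifP; lia.
Qed.

Definition cells (S : {set 'I_n}) : seq bool :=
  mkseq (fun i => [exists u, (target_cell u == i) && (u \notin S)]) n.+1.

Lemma size_cells S : size (cells S) = n.+1.
Proof. exact: size_mkseq. Qed.

Lemma nth_cells S i :
  nth false (cells S) i = [exists u, (target_cell u == i) && (u \notin S)].
Proof.
case: (ltnP i n.+1) => [lt_in | le_ni]; first by rewrite nth_mkseq.
rewrite nth_default ?size_cells //; symmetry; apply/existsP => -[u /andP[/eqP ui _]].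
by have := target_cell_le u; rewrite ui; lia.
Qed.

Lemma nth_cells_sep S : nth false (cells S) m = false.
Proof.
rewrite nth_cells; apply/existsP => -[u /andP[/eqP um _]].
by have := target_cell_neq u; rewrite um eqxx.
Qed.

Lemma cells_play S v : cells (S :|: nbhd adj v) = clear2 (move_cell v) (cells S).
Proof.
apply: (@eq_from_nth _ false); first by rewrite size_clear2 !size_cells.
move=> i _; rewrite nth_clear2 !nth_cells; apply/existsP/idP.
- case=> u /andP[/eqP <-]; rewrite !inE path_adj_cells negb_or => /andP[uS].
  by rewrite negb_or => /andP[-> ->]; rewrite !andbT; apply/existsP; exists u; rewrite eqxx.
- case/and3P=> /existsP[u /andP[/eqP ui uS]] ne1 ne2; exists u.
  by rewrite ui eqxx !inE negb_or uS path_adj_cells ui negb_or ne1.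
Qed.

Lemma legal_cells S v : legal adj S v =
  nth false (cells S) (move_cell v) || nth false (cells S) (move_cell v).+1.
Proof.
rewrite !nth_cells; apply/existsP/orP.
- by case=> u /andP[]; rewrite path_adj_cells => /orP[] /eqP ui uS; [left | right];
    apply/existsP; exists u; rewrite ui eqxx.
- by case=> /existsP[u /andP[/eqP ui uS]]; exists u; rewrite path_adj_cells ui eqxx ?orbT.
Qed.

Lemma cells_over S : (forall v, ~~ legal adj S v) -> true \notin cells S.
Proof.
move=> over; apply/negP => /(nthP false)[i _]; rewrite nth_cells => /existsP[u /andP[_ uS]].
suff [w wu] : exists w : 'I_n, adj w u.
  by have /existsP := over w; apply; exists u; rewrite wu.
case: (ltnP u.+1 n) => [lt_u1n | le_nu1].
  by exists (Ordinal lt_u1n); rewrite /path_adj /= eqxx orbT.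
have lt_u1n : u.-1 < n by have := ltn_ord u; lia.
exists (Ordinal lt_u1n); rewrite /path_adj /=; apply/orP; left.
by apply/eqP; have := ltn_ord u; lia.
Qed.

Lemma path_value_over S : (forall v, ~~ legal adj S v) ->
  forall dom, clear_value dom (cells S) = 0.
Proof. by move=> /cells_over no_true []; rewrite /clear_value !sum_runs_no_true. Qed.

Lemma path_value_bounds S v : legal adj S v ->
  clear_value true (cells S) <= (clear_value false (cells (S :|: nbhd adj v))).+1 /\
  (clear_value true (cells (S :|: nbhd adj v))).+1 <= clear_value false (cells S).
Proof.
rewrite legal_cells cells_play; apply: clear_value_move_bounds.
by rewrite size_cells ltnS move_cell_le.
Qed.

Lemma path_value_optimal dom S v : legal adj S v -> exists2 w, legal adj S w &
  clear_value dom (cells S) = (clear_value (~~ dom) (cells (S :|: nbhd adj w))).+1.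
Proof.
rewrite legal_cells => cells_v.
have S_true : true \in cells S.
  case/orP: cells_v => cell_i; rewrite -cell_i mem_nth // ltnNge;
    by apply: contraTN cell_i => le_si; rewrite nth_default.
have [p [lt_p cell_p ->]] := clear_value_optimal dom S_true.
have [w wp] : exists w, move_cell w = p.
  apply: move_cell_onto; first by rewrite -ltnS -(size_cells S).
  by apply: contraTneq cell_p => ->; rewrite nth_cells_sep.
by exists w; rewrite ?legal_cells ?cells_play wp ?cell_p.
Qed.

Lemma gamma_tg_path : gamma_tg adj = clear_value true (cells set0).
Proof. exact: gamma_tg_eq path_value_over path_value_bounds path_value_optimal. Qed.

Lemma gamma_tg_pre_path v : gamma_tg_pre adj v = clear_value true (cells [set v]).
Proof. exact: (gamma_tg_pre_eq path_value_over path_value_bounds path_value_optimal v). Qed.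

Lemma cells_set0 : cells set0 = nseq m true ++ false :: nseq m true.
Proof.
apply: (@eq_from_nth _ false); first by rewrite size_cells size_cat /= !size_nseq; lia.
move=> i; rewrite size_cells => lt_in; rewrite nth_cells nth_nseq_cat_false nth_nseq.
have -> : [exists u, (target_cell u == i) && (u \notin set0)] = (i <= n) && (i != m).
  apply/existsP/idP => [[u /andP[/eqP <- _]] | /andP[le_in ne_im]].
    by rewrite target_cell_le target_cell_neq.
  by have [u ui] := target_cell_onto le_in ne_im; exists u; rewrite ui eqxx inE.
by case: ltngtP => ? /=; rewrite ?andbT; try case: ifP; lia.
Qed.

Lemma cells_set1 v j : target_cell v = j ->
  cells [set v] = nseq (minn j m) true ++ false ::
    nseq (maxn j m - minn j m).-1 true ++ false :: nseq (n - maxn j m) true.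
Proof.
move=> vj; have le_jn := target_cell_le v; have ne_jm := target_cell_neq v.
rewrite vj in le_jn ne_jm.
apply: (@eq_from_nth _ false).
  by rewrite size_cells size_cat /= size_cat /= !size_nseq; lia.
move=> i; rewrite size_cells => lt_in; rewrite nth_cells !nth_nseq_cat_false !nth_nseq.
have -> : [exists u, (target_cell u == i) && (u \notin [set v])] =
          [&& i <= n, i != m & i != j].
  apply/existsP/idP => [[u /andP[/eqP <-]] | /and3P[le_in ne_im ne_ij]].
    rewrite inE target_cell_le target_cell_neq -vj.
    by apply: contra => /eqP/target_cell_inj ->.
  have [u ui] := target_cell_onto le_in ne_im; exists u.
  by rewrite ui eqxx inE; apply: contra ne_ij => /eqP uv; rewrite -ui uv vj.
by case: (ltngtP j m) => ?; first [by rewrite eqxx in ne_jm | repeat case: ifP; lia].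
Qed.

Lemma path_critical : m %% 3 != 0 -> gamma_tg_critical adj.
Proof.
move=> m3 v; rewrite gamma_tg_pre_path gamma_tg_path cells_set0 (cells_set1 erefl).
rewrite /clear_value !sum_runs_cat_false // !sum_runs_nseq // /run_value /mod3_two.
have := target_cell_le v; have := target_cell_neq v; move: (target_cell v) => j.
by case: (ltngtP j m) => [? ? ? | ? ? ? | ->]; rewrite ?eqxx //; lia.
Qed.

End PathCells.

Theorem corollary3p7 (n : nat) :
  2 <= n -> (n %% 6 == 2) || (n %% 6 == 4) ->
  gamma_tg_critical (path_adj n).
Proof.
move=> le2n n_mod6; have -> : n = n./2.*2 by lia.
by apply: path_critical; lia.
Qed.
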